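(* Let $\mathfrak{g}$ be a non-abelian real Lie algebra of dimension $m=2n$. Then every almost-complex structure on $\mathfrak{g}$ is integrable (i.e. $\mathcal{C}(\mathfrak{g})=\mathcal{C}$) if and only if $\mathfrak{g}$ has a basis $\{e_0,e_1,\dots,e_{m-1}\}$ such that $[e_0,e_i]=e_i=-[e_i,e_0]$ for all $i\ge1$, with all other brackets of basis elements zero.
   Context: $\mathcal{C}$ is the set of linear maps $J\colon\mathfrak{g}\to\mathfrak{g}$ with $J^2=-1$ (almost-complex structures), and $\mathcal{C}(\mathfrak{g})\subseteq\mathcal{C}$ is the subset of those satisfying $[JX,JY]=[X,Y]+J[JX,Y]+J[X,JY]$ for all $X,Y\in\mathfrak{g}$. *)

From HB Require Import structures.
From mathcomp Require Import all_boot all_order all_algebra.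
From mathcomp Require Export reals.
Set Implicit Arguments. Unset Strict Implicit. Unset Printing Implicit Defensive.
Import Order.TTheory GRing.Theory Num.Theory.
Local Open Scope ring_scope.

Definition is_lie_bracket (R : nzRingType) (V : lmodType R) (br : V -> V -> V) : Prop :=
  [/\ forall x, linear (br x),
      forall y, linear (fun x => br x y),
      forall x, br x x = 0
    & forall x y z, br x (br y z) + br y (br z x) + br z (br x y) = 0].

Definition almost_complex (R : nzRingType) (V : lmodType R) (J : V -> V) : Prop :=
  linear J /\ forall x, J (J x) = - x.

(* integrability (vanishing Nijenhuis tensor) as in the paper *)
Definition integrable (R : nzRingType) (V : lmodType R) (br : V -> V -> V) (J : V -> V) : Prop :=
  forall X Y, br (J X) (J Y) = br X Y + J (br (J X) Y) + J (br X (J Y)).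

(* Suppose every almost-complex structure is integrable and r = [x, y] is not in
   span(x, y).  Complete r, y, x, w to a basis, let J be the structure with J r = y
   and J x = w, and conjugate it by the map multiplying the y-coordinate by t.  The
   y-coordinate of the integrability condition at (w, y) reads t A = C - 1/t - D
   with A, C, D independent of t, which fails for t = 1, -1, 2.  Hence every plane
   is a subalgebra, and comparing coordinates in a basis shows that the bracket is
   [u, v] = f(u) v - f(v) u for a linear form f; a basis with f(e_0) = 1 and
   f(e_i) = 0 for i > 0 gives the normal form. *)

From HB Require Import structures.
From mathcomp Require Import all_boot all_order all_algebra.
From mathcomp Require Import reals.
From mathcomp Require Import zify lra.
Import Order.TTheory GRing.Theory Num.Theory.
Local Open Scope ring_scope.
Set Implicit Arguments. Unset Strict Implicit. Unset Printing Implicit Defensive.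

Section RawLinear.
Variables (R : nzRingType) (U W : lmodType R) (f : U -> W).
Hypothesis f_lin : linear f.

Let f_linear : {linear U -> W} := HB.pack f (GRing.isLinear.Build _ _ _ _ f f_lin).

Lemma lin0 : f 0 = 0. Proof. exact: (linear0 f_linear). Qed.
Lemma linD u v : f (u + v) = f u + f v. Proof. exact: (linearD f_linear). Qed.
Lemma linN u : f (- u) = - f u. Proof. exact: (linearN f_linear). Qed.
Lemma linZ a u : f (a *: u) = a *: f u. Proof. exact: (linearZ_LR f_linear). Qed.
Lemma lin_sum (I : finType) (F : I -> U) : f (\sum_i F i) = \sum_i f (F i).
Proof. exact: (linear_sum f_linear). Qed.

End RawLinear.

Lemma bracket_antisym (R : nzRingType) (V : lmodType R) (br : V -> V -> V) :
  (forall x, linear (br x)) -> (forall y, linear (br^~ y)) ->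
  (forall x, br x x = 0) -> forall x y, br x y = - br y x.
Proof.
move=> br_linr br_linl br_alt x y; apply/eqP; rewrite -addr_eq0.
have := br_alt (x + y); rewrite (linD (br_linr _)) !(linD (br_linl _)) !br_alt.
by rewrite add0r addr0 addrC => ->.
Qed.

Section Bases.
Variables (K : fieldType) (V : vectType K).

Lemma linear_eq_span (W : lmodType K) (f g : V -> W) (X : seq V) :
  linear f -> linear g -> {in X, f =1 g} -> {in <<X>>%VS, f =1 g}.
Proof.
move=> f_lin g_lin eq_fg v; rewrite -[X]/(val (in_tuple X)) => /coord_span ->.
rewrite (lin_sum f_lin) (lin_sum g_lin); apply: eq_bigr => i _.
by rewrite (linZ f_lin) (linZ g_lin) eq_fg // mem_nth.
Qed.

Lemma bilinear_eq_basis (W : lmodType K) (b c : V -> V -> W) m (X : m.-tuple V) :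
  basis_of fullv X ->
  (forall u, linear (b u)) -> (forall v, linear (b^~ v)) ->
  (forall u, linear (c u)) -> (forall v, linear (c^~ v)) ->
  (forall i j, b (tnth X i) (tnth X j) = c (tnth X i) (tnth X j)) -> b =2 c.
Proof.
move=> bX b_linr b_linl c_linr c_linl eq_bc u v.
have inX w : w \in <<X>>%VS by rewrite (span_basis bX) memvf.
apply: (linear_eq_span (b_linl v) (c_linl v)) (inX u) => _ /tnthP [i ->].
by apply: (linear_eq_span (b_linr _) (c_linr _)) (inX v) => _ /tnthP [j ->].
Qed.

Lemma mem_span2 (a b v : V) :
  v \in <<[:: a; b]>>%VS -> exists c d, v = c *: a + d *: b.
Proof.
rewrite span_cons span_seq1 => /memv_addP [_ /vlineP [c ->] [_ /vlineP [d ->] ->]].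
by exists c, d.
Qed.

Lemma free2_separated (u w : V) (phi psi : {scalar V}) :
  phi u = 1 -> phi w = 0 -> psi w = 1 -> free [:: u; w].
Proof.
move=> phi_u phi_w psi_w; rewrite free_cons seq1_free span_seq1.
apply/andP; split.
  apply/vlineP => -[c u_cw]; move: phi_u; rewrite u_cw scalarZ phi_w mulr0.
  by move/eqP; rewrite eq_sym oner_eq0.
by apply: contra_eq_neq psi_w => ->; rewrite linear0 eq_sym oner_neq0.
Qed.

Lemma free_extend_basis (X : seq V) :
  free X -> exists Y, basis_of fullv (X ++ Y).
Proof.
move=> freeX; exists (vbasis (<<X>>^C)%VS); rewrite -(addv_complf <<X>>%VS).
apply: cat_basis; last exact: vbasisP.
  by apply/directv_addP; apply: capv_compl.
by rewrite /basis_of eqxx.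
Qed.

Lemma scalar_of_basis m (X : m.-tuple V) (a : 'I_m -> K) :
  free X -> exists f : {scalar V}, forall i : 'I_m, f X`_i = a i.
Proof.
move=> freeX; pose g v := \sum_i a i * coord X i v.
have g_scalar : scalar g.
  move=> c u w; rewrite /g mulr_sumr -big_split; apply: eq_bigr => k _ /=.
  by rewrite linearP mulrDr mulrCA.
pose f : {scalar V} :=
  HB.pack g (GRing.isSemilinear.Build K V K _ g (GRing.semilinear_linear g_scalar)).
exists f => i /=; rewrite /g (bigD1 i) //= coord_free // eqxx mulr1.
by rewrite big1 ?addr0 // => j ji; rewrite coord_free // eq_sym (negbTE ji) mulr0.
Qed.

End Bases.

Definition quarter_turn (V : zmodType) (X : seq V) : seq V :=
  mkseq (fun i => if odd i then - X`_i.-1 else X`_i.+1) (size X).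

Lemma almost_complex_of_basis (K : fieldType) (V : vectType K) (X : seq V) :
  basis_of fullv X -> ~~ odd (size X) ->
  exists J : {linear V -> V}, almost_complex J /\ map J X = quarter_turn X.
Proof.
move=> bX evenX; have [J J_X] := linear_of_free X (quarter_turn X).
have {}J_X : map J X = quarter_turn X.
  by apply: J_X; [exact: basis_free bX | exact: size_mkseq].
have J_nth i : (i < size X)%N -> J X`_i = (quarter_turn X)`_i.
  by move=> ltiX; rewrite -J_X (nth_map 0).
exists J; split=> //; split=> [|v]; first exact: linearP.
apply: (@linear_eq_span _ _ _ (J \o J) -%R X); last by rewrite (span_basis bX) memvf.
- by move=> a u w; rewrite /= !linearP.
- by move=> a u w; rewrite opprD scalerN.
move=> _ /(nthP 0) [i ltiX <-] /=; rewrite J_nth // nth_mkseq //.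
(* the occurrences of [size X] differ in an implicit argument, which lia would not see *)
set n := size X in evenX ltiX J_nth *.
case: ifP => odd_i.
  have i_gt0 : (0 < i)%N by lia.
  have lt_iX : (i.-1 < n)%N by lia.
  have even_i1 : odd i.-1 = false by lia.
  by rewrite linearN J_nth // nth_mkseq // even_i1 prednK.
have lt_iX : (i.+1 < n)%N by lia.
by rewrite J_nth // nth_mkseq //= odd_i.
Qed.

Lemma almost_complex_conj (R : nzRingType) (V : lmodType R) (S T : {linear V -> V})
    (J : V -> V) :
  cancel S T -> cancel T S -> almost_complex J -> almost_complex (T \o J \o S).
Proof.
move=> ST TS [J_lin JJ]; split=> [a u v|v] /=; first by rewrite linearP J_lin linearP.
by rewrite TS JJ linearN ST.
Qed.

Section Stretch.
Variables (K : fieldType) (V : lmodType K) (rho : {scalar V}) (y : V).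

Definition stretch (t : K) (v : V) : V := v + ((t - 1) * rho v) *: y.

Fact stretch_is_linear t : linear (stretch t).
Proof.
move=> a u v; rewrite /stretch linearP mulrDr mulrCA scalerDl -[(a * _) *: y]scalerA.
by rewrite scalerDr addrACA.
Qed.

HB.instance Definition _ t :=
  GRing.isLinear.Build K V V _ (stretch t) (stretch_is_linear t).

Lemma stretch_ker t v : rho v = 0 -> stretch t v = v.
Proof. by move=> rho_v; rewrite /stretch rho_v mulr0 scale0r addr0. Qed.

Hypothesis rho_y : rho y = 1.

Lemma stretch_axis t : stretch t y = t *: y.
Proof. by rewrite /stretch rho_y mulr1 -{1}[y]scale1r -scalerDl addrC subrK. Qed.

Lemma scalar_stretch t v : rho (stretch t v) = t * rho v.
Proof. by rewrite /stretch linearD scalarZ rho_y mulr1 -{1}[rho v]mul1r -mulrDl addrC subrK. Qed.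

Lemma stretchK t : t != 0 -> cancel (stretch t) (stretch t^-1).
Proof.
move=> t0 v; rewrite {1}/stretch scalar_stretch /stretch -addrA -scalerDl mulrA -mulrDl.
by rewrite mulrBl mulVf // mul1r addrA subrK subrr mul0r scale0r addr0.
Qed.

Lemma stretchVK t : t != 0 -> cancel (stretch t^-1) (stretch t).
Proof. by move=> t0; rewrite -{2}[t]invrK; apply: stretchK; rewrite invr_eq0. Qed.

End Stretch.

Section AllIntegrable.
Variables (R : realFieldType) (V : vectType R) (br : V -> V -> V).
Hypothesis br_linr : forall x, linear (br x).
Hypothesis br_linl : forall y, linear (br^~ y).
Hypothesis br_alt : forall x, br x x = 0.
Hypothesis dim_even : ~~ odd (\dim {:V}).
Hypothesis all_integrable : forall J : V -> V, almost_complex J -> integrable br J.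

Lemma not_basis_bracket x y w (Y : seq V) : ~ basis_of fullv (br x y :: y :: x :: w :: Y).
Proof.
set r := br x y; set B := r :: _ => bB.
have size_B : size B = \dim {:V} by rewrite -(eqnP (basis_free bB)) (span_basis bB).
have [J1 [[_ J1J1] J1B]] := almost_complex_of_basis bB (ltac:(by rewrite size_B)).
move: J1B; rewrite /quarter_turn /= => -[J1r J1y _ J1w _].
pose rho : {scalar V} := coord (in_tuple B) (Ordinal (isT : (1 < size B)%N)).
have rho_B i (lt_iB : (i < size B)%N) : rho B`_i = (i == 1)%:R.
  exact: (@coord_free _ _ _ (in_tuple B) (Ordinal lt_iB) _ (basis_free bB)).
have rho_r : rho r = 0 := rho_B 0 isT.
have rho_y : rho y = 1 := rho_B 1 isT.
have rho_x : rho x = 0 := rho_B 2 isT.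
have rho_w : rho w = 0 := rho_B 3 isT.
pose A := rho (br x r); pose C := rho (br w y); pose D := rho (J1 (br w r)).
(* the y-coordinate of the integrability condition at (w, y) for a conjugate of J1 *)
have key t : t != 0 -> t * A = C - t^-1 - D.
  move=> t0; pose Jt := stretch rho y t^-1 \o J1 \o stretch rho y t.
  have Jt_ac : almost_complex Jt.
    apply: almost_complex_conj (stretchK rho_y t0) (stretchVK rho_y t0) _.
    by split=> //; apply: linearP.
  have Jt_w : Jt w = - x.
    by rewrite /Jt /= [stretch _ _ t w]stretch_ker // J1w stretch_ker // linearN rho_x oppr0.
  have Jt_y : Jt y = - (t *: r).
    rewrite /Jt /= stretch_axis // linearZ_LR J1y scalerN stretch_ker //.
    by rewrite linearN scalarZ rho_r mulr0 oppr0.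
  have rho_Jt v : rho (Jt v) = t^-1 * rho (J1 v).
    rewrite /Jt /= scalar_stretch // [stretch _ _ t v]/stretch linearD linearZ_LR J1y.
    by rewrite linearD scalarZ linearN rho_r oppr0 mulr0 addr0.
  have := congr1 rho (all_integrable Jt_ac w y); clearbody Jt.
  rewrite Jt_w Jt_y (linN (br_linr (- x))) (linZ (br_linr (- x))) (linN (br_linl r)).
  rewrite (linN (br_linl y)) (linN (br_linr w)) (linZ (br_linr w)) scalerN opprK -/r.
  rewrite !linearD !rho_Jt !(linearN J1) (linearZ_LR J1) J1r !linearN !scalarZ rho_y.
  by rewrite -/A -/C -/D => ->; rewrite mulrN1 mulrN mulKf.
have two_neq0 : (2 : R) != 0 by rewrite pnatr_eq0.
have := key 2 two_neq0; have := key (-1) (ltac:(by rewrite oppr_eq0 oner_neq0)).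
have := key 1 (oner_neq0 _); rewrite invrN1 invr1.
by have := mulfV two_neq0; move: (2^-1) => h; lra.
Qed.

Lemma bracket_mem_span2 x y : free [:: x; y] -> br x y \in <<[:: x; y]>>%VS.
Proof.
move=> free_xy; rewrite (bracket_antisym br_linr br_linl br_alt) memvN.
apply: contraT => yx_notin.
have free_yxxy : free [:: br y x; x; y] by rewrite free_cons yx_notin.
have [[|w Y] bB] := free_extend_basis free_yxxy.
  by move: dim_even; rewrite -(span_basis bB) (eqnP (basis_free bB)).
by case: (not_basis_bracket bB).
Qed.

End AllIntegrable.

Section ScalarBracket.
Variables (K : fieldType) (V : vectType K) (f : {scalar V}).

Definition scalar_bracket (u v : V) : V := f u *: v - f v *: u.

Lemma scalar_bracket_linr u : linear (scalar_bracket u).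
Proof.
move=> a v w; rewrite /scalar_bracket linearP scalerDr scalerDl scalerBr !scalerA.
by rewrite mulrC opprD addrACA.
Qed.

Lemma scalar_bracket_linl v : linear (scalar_bracket^~ v).
Proof.
move=> a u w; rewrite /scalar_bracket linearP scalerDr scalerDl scalerBr !scalerA.
by rewrite [f v * a]mulrC opprD addrACA.
Qed.

Lemma scalar_bracket_integrable br J :
  br =2 scalar_bracket -> almost_complex J -> integrable br J.
Proof.
move=> br_f [J_lin JJ] u v; rewrite !br_f /scalar_bracket.
rewrite !(linD J_lin) !(linN J_lin) !(linZ J_lin) !JJ !scalerN opprK.
by rewrite (addrACA (f u *: v)) addNr addr0 addrACA subrr add0r.
Qed.

Lemma adapted_basis m u : \dim {:V} = m -> f u = 1 ->
  exists e : m.-tuple V, basis_of fullv e /\ forall i : 'I_m, f (tnth e i) = (val i == 0)%:R.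
Proof.
move=> dimV fu1.
have u_neq0 : u != 0 by apply: contra_eq_neq fu1 => ->; rewrite linear0 eq_sym oner_neq0.
have [Y bY] := free_extend_basis (ltac:(by rewrite seq1_free) : free [:: u]).
set e := u :: [seq v - f v *: u | v <- Y].
have size_e : size e == m.
  by rewrite /= size_map -dimV -(span_basis bY) (eqnP (basis_free bY)).
exists (Tuple size_e); split.
  rewrite basisEdim (eqP size_e) dimV leqnn andbT -(span_basis bY).
  have u_e : u \in <<e>>%VS by rewrite memv_span ?mem_head.
  apply/span_subvP => v; rewrite inE => /predU1P [-> // | Yv].
  rewrite -(subrK (f v *: u) v) memvD ?memvZ // memv_span // inE.
  by apply/orP; right; apply/mapP; exists v.
move=> [[|i] lt_im]; rewrite (tnth_nth 0) //=.
have lt_iY : (i < size Y)%N by move: lt_im; rewrite -(eqP size_e) /= size_map.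
by rewrite (nth_map 0) // linearB scalarZ fu1 mulr1 subrr.
Qed.

Lemma scalar_bracket_neq0 x y : scalar_bracket x y != 0 -> exists u, f u = 1.
Proof.
move=> fxy; suff [v fv] : exists v, f v != 0 by exists ((f v)^-1 *: v); rewrite scalarZ mulVf.
have [fx0 | ] := eqVneq (f x) 0; last by exists x.
have [fy0 | ] := eqVneq (f y) 0; last by exists y.
by move: fxy; rewrite /scalar_bracket fx0 fy0 !scale0r subrr eqxx.
Qed.

Lemma scalar_bracket_adapted m (e : m.-tuple V) (i j : 'I_m) :
  (forall k : 'I_m, f (tnth e k) = (val k == 0)%:R) ->
  scalar_bracket (tnth e i) (tnth e j) =
    if (val i == 0%N) && (val j != 0%N) then tnth e j
    else if (val j == 0%N) && (val i != 0%N) then - tnth e i else 0.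
Proof.
move=> fe; rewrite /scalar_bracket !fe.
case: (eqVneq (val i) 0%N) => i0; case: (eqVneq (val j) 0%N) => j0 /=.
- by rewrite (_ : i = j) ?subrr //; apply: val_inj; rewrite i0 j0.
- by rewrite scale1r scale0r subr0.
- by rewrite scale1r scale0r sub0r.
- by rewrite !scale0r subrr.
Qed.

End ScalarBracket.

Section SpanClosedBracket.
Variables (K : fieldType) (V : vectType K) (br : V -> V -> V).
Hypothesis br_linr : forall x, linear (br x).
Hypothesis br_linl : forall y, linear (br^~ y).
Hypothesis br_alt : forall x, br x x = 0.
Hypothesis br_span2 : forall x y, free [:: x; y] -> br x y \in <<[:: x; y]>>%VS.
Variables (m : nat) (X : m.-tuple V).
Hypothesis bX : basis_of fullv X.

Let coordX (i j : 'I_m) : coord X j X`_i = (i == j)%:R.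
Proof. exact: coord_free (basis_free bX). Qed.

Let coef (i j : 'I_m) := coord X j (br X`_i X`_j).

Lemma bracket_basis_pair (i j : 'I_m) :
  i != j -> br X`_i X`_j = - coef j i *: X`_i + coef i j *: X`_j.
Proof.
move=> ij; have ji : j != i by rewrite eq_sym.
have free_ij : free [:: X`_i; X`_j].
  apply: (free2_separated (phi := coord X i) (psi := coord X j));
    by rewrite /= !coordX ?eqxx ?(negbTE ji).
have [c [d br_ij]] := mem_span2 (br_span2 free_ij).
rewrite /coef (bracket_antisym br_linr br_linl br_alt X`_j) br_ij.
rewrite linearN !linearD !scalarZ /= !coordX !eqxx (negbTE ij) (negbTE ji).
by rewrite !mulr0 !mulr1 addr0 add0r opprK.
Qed.

Lemma coef_const (i j k : 'I_m) : i != j -> i != k -> j != k -> coef i j = coef i k.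
Proof.
move=> ij ik jk; have [ji ki kj] : [/\ j != i, k != i & k != j] by rewrite !(eq_sym k) eq_sym.
have neqE := (negbTE ij, negbTE ik, negbTE jk, negbTE ji, negbTE ki, negbTE kj).
have free_i_jk : free [:: X`_i; X`_j + X`_k].
  apply: (free2_separated (phi := coord X i) (psi := coord X j));
    by rewrite /= ?linearD /= !coordX ?eqxx ?neqE ?addr0.
have [c [d br_i_jk]] := mem_span2 (br_span2 free_i_jk).
rewrite (linD (br_linr _)) !bracket_basis_pair // in br_i_jk.
have := congr1 (coord X j) br_i_jk; have := congr1 (coord X k) br_i_jk.
rewrite !linearD !scalarZ /= !coordX !eqxx !neqE !mulr0 !mulr1 !add0r !addr0.
by move=> -> ->.
Qed.

Let fcoef i := coef i (odflt i [pick j | j != i]).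

Lemma coef_fcoef i j : i != j -> coef i j = fcoef i.
Proof.
move=> ij; rewrite /fcoef; case: pickP => [k ki | /(_ j)] /=; last by rewrite eq_sym ij.
have [-> // | jk] := eqVneq j k.
by apply: coef_const; rewrite // eq_sym.
Qed.

Lemma scalar_bracket_of_span2 : exists f : {scalar V}, br =2 scalar_bracket f.
Proof.
have [f f_X] := scalar_of_basis fcoef (basis_free bX).
exists f; apply: (bilinear_eq_basis bX) => //; first exact: scalar_bracket_linr.
  exact: scalar_bracket_linl.
move=> i j; rewrite !(tnth_nth 0) /scalar_bracket !f_X.
have [<- | ij] := eqVneq i j; first by rewrite br_alt subrr.
by rewrite bracket_basis_pair // (coef_fcoef ij) coef_fcoef 1?eq_sym // addrC scaleNr.
Qed.

End SpanClosedBracket.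

Unset Implicit Arguments.

Theorem proposition4p1 (R : realType) (V : vectType R) (br : V -> V -> V) (n : nat) :
  is_lie_bracket br ->
  \dim (fullv : {vspace V}) = (2 * n)%N ->
  (exists x y : V, br x y != 0) ->
  ((forall J : V -> V, almost_complex J -> integrable br J) <->
   exists e : (2 * n).-tuple V,
     basis_of fullv e /\
     forall i j : 'I_(2 * n),
       br (tnth e i) (tnth e j) =
         if (val i == 0%N) && (val j != 0%N) then tnth e j
         else if (val j == 0%N) && (val i != 0%N) then - tnth e i
         else 0).
Proof.
move=> [br_linr br_linl br_alt _] dimV [x [y br_xy]].
have dim_even : ~~ odd (\dim {:V}) by rewrite dimV mul2n odd_double.
split=> [all_integrable | [e [be e_br]] J acJ].
  have br_span2 := bracket_mem_span2 br_linr br_linl br_alt dim_even all_integrable.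
  have [f br_f] := scalar_bracket_of_span2 br_linr br_linl br_alt br_span2 (vbasisP fullv).
  have [u fu1] := scalar_bracket_neq0 (ltac:(by rewrite -br_f) : scalar_bracket f x y != 0).
  have [e [be fe]] := adapted_basis dimV fu1.
  by exists e; split=> // i j; rewrite br_f; apply: scalar_bracket_adapted.
have dim_gt0 : (0 < 2 * n)%N.
  rewrite lt0n -dimV dimv_eq0; apply: contra_neq br_xy => V0.
  by move: (memvf x); rewrite V0 memv0 => /eqP ->; rewrite (lin0 (br_linl y)).
pose f := coord e (Ordinal dim_gt0).
apply: (scalar_bracket_integrable (f := f)) acJ.
apply: (bilinear_eq_basis be br_linr br_linl (scalar_bracket_linr f) (scalar_bracket_linl f)).
move=> i j; rewrite e_br scalar_bracket_adapted // => k.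
by rewrite (tnth_nth 0) /f /= coord_free ?(basis_free be).
Qed.
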